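(* Let $\tau=(G,H,\eta,T)$ be folding data for a symmetric monoidal category $\mathcal{C}$ with strict $G$-action $\phi$ by strict monoidal autofunctors. Then for each $g\in G$ and each object $A$ of $\hat{\mathcal{C}}_{H,\eta}$ there is an isomorphism $\alpha_A^g:\phi_g(\mathrm{Fold}_\tau A)\to\mathrm{Fold}_\tau A$ in $\mathcal{C}$, namely $\alpha_A^g=\rho_A^g\circ\sigma_A^g$ where $\sigma_A^g$ is a composite of symmetry isomorphisms reordering tensor factors and $\rho_A^g=\bigotimes_{t\in T}\phi_t((\eta_A^{h_t})^{-1})$ for suitable $h_t\in H$, such that for every morphism $f:A\to B$ of $\hat{\mathcal{C}}_{H,\eta}$, $$\alpha_B^g\circ\phi_g(\mathrm{Fold}_\tau f)\circ(\alpha_A^g)^{-1}=\mathrm{Fold}_\tau f.$$ In other words, each $\phi_g$, applied to the folded category $\mathrm{FLD}_\tau(\mathcal{C})$, is naturally isomorphic to the identity on $\mathrm{FLD}_\tau(\mathcal{C})$.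
   Context: Setup: $\mathcal{C}$ is a symmetric monoidal category, $G$ a finite group, $\phi:G\to\mathrm{Aut}(\mathcal{C})$ a strict left action ($\phi_g\phi_h=\phi_{gh}$, $\phi_e=\mathrm{id}$) by strict monoidal autofunctors. For $H\le G$, $\eta=(\eta_A^h)$ is a family of isomorphisms $\eta_A^h:A\to\phi_hA$ ($A\in\mathrm{ob}\,\mathcal{C}$, $h\in H$) with $\phi_h(\eta_A^{h'})\circ\eta_A^h=\eta_A^{hh'}$ and $\eta^h_{A\otimes B}=\eta^h_A\otimes\eta^h_B$. $\hat{\mathcal{C}}_{H,\eta}$ is the category with objects the pairs $(A,(\eta_A^h)_{h\in H})$ and morphisms those $f:A\to B$ of $\mathcal{C}$ with $\phi_h(f)\circ\eta_A^h=\eta_B^h\circ f$ for all $h\in H$. Folding data is $\tau=(G,H,\eta,T)$ with $T$ a left transversal of $H$ in $G$ (one representative of each left coset $tH$), with a fixed ordering. The folding functor $\mathrm{Fold}_\tau:\hat{\mathcal{C}}_{H,\eta}\to\mathcal{C}$ sends $A\mapsto\bigotimes_{t\in T}\phi_tA$ and $f\mapsto\bigotimes_{t\in T}\phi_tf$. The folded category $\mathrm{FLD}_\tau(\mathcal{C})$ is the image subcategory of $\mathcal{C}$. For $g\in G$, $gT$ is another left transversal, and $h_t\in H$ is defined by: the representative of the coset $tH$ in $gT$ is $th_t$. *)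

From mathcomp Require Import all_boot all_fingroup.
Set Implicit Arguments. Unset Strict Implicit. Unset Printing Implicit Defensive.

(* Categories (hom-equality is Leibniz equality).                       *)
Record Category := {
  ob :> Type;
  hom : ob -> ob -> Type;
  cid : forall A, hom A A;
  comp : forall A B D, hom B D -> hom A B -> hom A D;
  comp_idl : forall A B (f : hom A B), comp (cid B) f = f;
  comp_idr : forall A B (f : hom A B), comp f (cid A) = f;
  comp_assoc : forall A B D E (f : hom D E) (g : hom B D) (h : hom A B),
      comp f (comp g h) = comp (comp f g) h }.
Arguments hom {c}.
Arguments cid {c}.
Arguments comp {c A B D}.

Declare Scope cat_scope.
Delimit Scope cat_scope with cat.
Notation "f \oc g" := (comp f g) (at level 50, left associativity) : cat_scope.
Local Open Scope cat_scope.

Definition castm (C : Category) (A B : C) (e : A = B) : hom A B :=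
  match e in _ = B return hom A B with erefl => cid A end.

Record SymMonCat := {
  smc_cat :> Category;
  tens : smc_cat -> smc_cat -> smc_cat;
  tensm : forall A A' B B', hom A A' -> hom B B' -> hom (tens A B) (tens A' B');
  tunit : smc_cat;
  tensm_id : forall A B, tensm (cid A) (cid B) = cid (tens A B);
  tensm_comp : forall A A' A'' B B' B'' (f : hom A A') (f' : hom A' A'')
      (g : hom B B') (g' : hom B' B''),
      tensm (f' \oc f) (g' \oc g) = tensm f' g' \oc tensm f g;
  assoc : forall A B D, hom (tens (tens A B) D) (tens A (tens B D));
  assoc_inv : forall A B D, hom (tens A (tens B D)) (tens (tens A B) D);
  lunit : forall A, hom (tens tunit A) A;
  lunit_inv : forall A, hom A (tens tunit A);
  runit : forall A, hom (tens A tunit) A;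
  runit_inv : forall A, hom A (tens A tunit);
  braid : forall A B, hom (tens A B) (tens B A);
  assoc_iso1 : forall A B D, assoc_inv A B D \oc assoc A B D = cid _;
  assoc_iso2 : forall A B D, assoc A B D \oc assoc_inv A B D = cid _;
  lunit_iso1 : forall A, lunit_inv A \oc lunit A = cid _;
  lunit_iso2 : forall A, lunit A \oc lunit_inv A = cid _;
  runit_iso1 : forall A, runit_inv A \oc runit A = cid _;
  runit_iso2 : forall A, runit A \oc runit_inv A = cid _;
  assoc_nat : forall A A' B B' D D' (f : hom A A') (g : hom B B') (h : hom D D'),
      assoc A' B' D' \oc tensm (tensm f g) h = tensm f (tensm g h) \oc assoc A B D;
  lunit_nat : forall A A' (f : hom A A'), lunit A' \oc tensm (cid tunit) f = f \oc lunit A;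
  runit_nat : forall A A' (f : hom A A'), runit A' \oc tensm f (cid tunit) = f \oc runit A;
  braid_nat : forall A A' B B' (f : hom A A') (g : hom B B'),
      braid A' B' \oc tensm f g = tensm g f \oc braid A B;
  pentagon : forall A B D E,
      assoc A B (tens D E) \oc assoc (tens A B) D E
      = tensm (cid A) (assoc B D E) \oc assoc A (tens B D) E
        \oc tensm (assoc A B D) (cid E);
  triangle : forall A B,
      tensm (cid A) (lunit B) \oc assoc A tunit B = tensm (runit A) (cid B);
  hexagon : forall A B D,
      assoc B D A \oc braid A (tens B D) \oc assoc A B D
      = tensm (cid B) (braid A D) \oc assoc B A D \oc tensm (braid A B) (cid D);
  braid_sym : forall A B, braid B A \oc braid A B = cid (tens A B) }.

Arguments tens {s}.
Arguments tensm {s A A' B B'}.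
Arguments tunit {s}.
Arguments assoc {s}.
Arguments assoc_inv {s}.
Arguments lunit {s}.
Arguments lunit_inv {s}.
Arguments runit {s}.
Arguments runit_inv {s}.
Arguments braid {s}.

Notation "A (x) B" := (tens A B) (at level 40, left associativity) : cat_scope.
Notation "f <x> g" := (tensm f g) (at level 40, left associativity) : cat_scope.

Record Functor (C : Category) := {
  Fob :> C -> C;
  Fmor : forall A B, hom A B -> hom (Fob A) (Fob B);
  Fmor_id : forall A, Fmor (cid A) = cid (Fob A);
  Fmor_comp : forall A B D (f : hom B D) (g : hom A B),
      Fmor (f \oc g) = Fmor f \oc Fmor g }.
Arguments Fmor {C} _ {A B} _.

(* strict monoidal: equalities of objects, and equalities of morphisms up to
   the canonical transports along these object equalities *)
Record strict_monoidal (C : SymMonCat) (F : Functor C) := {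
  sm_tens : forall A B : C, F (A (x) B) = F A (x) F B;
  sm_unit : F tunit = tunit;
  sm_tensm : forall A A' B B' (f : hom A A') (g : hom B B'),
      castm (sm_tens A' B') \oc Fmor F (f <x> g)
      = (Fmor F f <x> Fmor F g) \oc castm (sm_tens A B);
  sm_assoc : forall A B D : C,
      castm (etrans (sm_tens A (B (x) D)) (f_equal (tens (F A)) (sm_tens B D)))
        \oc Fmor F (assoc A B D)
      = assoc (F A) (F B) (F D)
        \oc castm (etrans (sm_tens (A (x) B) D)
                         (f_equal (fun X => X (x) F D) (sm_tens A B)));
  sm_lunit : forall A : C,
      Fmor F (lunit A)
      = lunit (F A) \oc castm (etrans (sm_tens tunit A)
                                     (f_equal (fun X => X (x) F A) sm_unit));
  sm_runit : forall A : C,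
      Fmor F (runit A)
      = runit (F A) \oc castm (etrans (sm_tens A tunit)
                                     (f_equal (fun X => F A (x) X) sm_unit)) }.

(* The group G is the whole finGroupType gT.                            *)
Local Open Scope group_scope.

Record StrictAction (gT : finGroupType) (C : SymMonCat) := {
  act :> gT -> Functor C;
  act_monoidal : forall g, strict_monoidal (act g);
  act1_ob : forall A : C, act 1 A = A;
  act1_mor : forall A B (f : hom A B),
      castm (act1_ob B) \oc Fmor (act 1) f = f \oc castm (act1_ob A);
  actM_ob : forall g h (A : C), act g (act h A) = act (g * h) A;
  actM_mor : forall g h A B (f : hom A B),
      castm (actM_ob g h B) \oc Fmor (act g) (Fmor (act h) f)
      = Fmor (act (g * h)) f \oc castm (actM_ob g h A) }.

Section Fold.
Variables (C : SymMonCat) (I : Type).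

Fixpoint foldobj (s : seq I) (F : I -> C) : C :=
  match s with
  | [::] => tunit
  | t :: s' => match s' with
               | [::] => F t
               | _ :: _ => F t (x) foldobj s' F
               end
  end.

Fixpoint foldmor (s : seq I) (F F' : I -> C) (f : forall t, hom (F t) (F' t))
  : hom (foldobj s F) (foldobj s F') :=
  match s return hom (foldobj s F) (foldobj s F') with
  | [::] => cid tunit
  | t :: s' =>
      match s' as s0 return hom (foldobj s0 F) (foldobj s0 F') ->
                            hom (foldobj (t :: s0) F) (foldobj (t :: s0) F') with
      | [::] => fun _ => f t
      | _ :: _ => fun r => f t <x> r
      end (foldmor s' f)
  end.
End Fold.

Inductive structural (C : SymMonCat) : forall A B : C, hom A B -> Prop :=
| st_id A : structural (cid A)
| st_cast A B (e : A = B) : structural (castm e)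
| st_braid A B : structural (braid A B)
| st_assoc A B D : structural (assoc A B D)
| st_assoc_inv A B D : structural (assoc_inv A B D)
| st_lunit A : structural (lunit A)
| st_lunit_inv A : structural (lunit_inv A)
| st_runit A : structural (runit A)
| st_runit_inv A : structural (runit_inv A)
| st_comp A B D (f : hom B D) (g : hom A B) :
    structural f -> structural g -> structural (f \oc g)
| st_tens A A' B B' (f : hom A A') (g : hom B B') :
    structural f -> structural g -> structural (f <x> g).

Definition left_transversal (gT : finGroupType) (H : {group gT}) (ts : seq gT) :=
  forall x : gT, count (fun t => x \in t *: H) ts = 1%N.

(* h_t : the representative of tH in the transversal gT is t * h_t *)
Definition hrep (gT : finGroupType) (H : {group gT}) (ts : seq gT) (g t : gT) : gT :=
  let gts := [seq g * u | u <- ts] in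
  t^-1 * nth 1 gts (find (fun u => u \in t *: H) gts).

Section Folding.
Variables (gT : finGroupType) (C : SymMonCat) (phi : StrictAction gT C)
          (H : {group gT}) (eta : forall (A : C) (h : gT), hom A (phi h A)).

Definition hat_mor (A B : C) (f : hom A B) : Prop :=
  forall h, h \in H -> Fmor (phi h) f \oc eta A h = eta B h \oc f.

Definition FoldOb (ts : seq gT) (A : C) : C := foldobj ts (fun t => phi t A).
Definition FoldMor (ts : seq gT) (A B : C) (f : hom A B)
  : hom (FoldOb ts A) (FoldOb ts B) :=
  foldmor ts (fun t => Fmor (phi t) f).
End Folding.

(* For g in G and A in \hat C_{H,eta}, the isomorphism
   alpha_A^g : phi_g (Fold A) -> Fold A is built in two stages.
   (1) Since phi_g is strict monoidal and phi is a strict action,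
       phi_g (Fold A) is, up to identity transports, the tensor product of the
       phi_{g t} A over t in T.  The list [g t | t in T] is a permutation of
       [t h_t | t in T] (both enumerate the left cosets of H exactly once), so
       a composite of symmetries sigma_A^g reorders it into
       (x)_t phi_t (phi_{h_t} A); this is natural in all morphisms of C.
   (2) rho_A^g = (x)_t phi_t ((eta_A^{h_t})^-1) removes the twists h_t; it is
       natural exactly for the morphisms of \hat C_{H,eta}. *)
From mathcomp Require Import all_boot all_fingroup.
From Stdlib Require ProofIrrelevance.
Set Implicit Arguments. Unset Strict Implicit. Unset Printing Implicit Defensive.
Local Open Scope cat_scope.

Section Inverses.
Variable C : Category.

Definition inverse_pair (A B : C) (f : hom A B) (f' : hom B A) : Prop :=
  f \oc f' = cid B /\ f' \oc f = cid A.

Lemma inverse_pair_comp (A B D : C) (f : hom A B) (f' : hom B A)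
  (g : hom B D) (g' : hom D B) :
  inverse_pair f f' -> inverse_pair g g' -> inverse_pair (g \oc f) (f' \oc g').
Proof.
move=> [ff' f'f] [gg' g'g]; split.
  by rewrite -comp_assoc (comp_assoc f) ff' comp_idl gg'.
by rewrite -comp_assoc (comp_assoc g') g'g comp_idl f'f.
Qed.

Lemma square_inverse (A A' B B' : C) (a : hom A A') (a' : hom A' A)
  (b : hom B B') (b' : hom B' B) (u : hom A B) (v : hom A' B') :
  inverse_pair a a' -> b' \oc b = cid B ->
  v \oc a = b \oc u -> b' \oc v = u \oc a'.
Proof.
move=> [aa' _] b'b sq.
by rewrite -[v]comp_idr -aa' (comp_assoc v) sq !comp_assoc b'b comp_idl.
Qed.

Lemma conj_square (A A' B B' : C) (a : hom A A') (a' : hom A' A) (b : hom B B')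
  (u : hom A B) (v : hom A' B') :
  inverse_pair a a' -> b \oc u = v \oc a -> b \oc u \oc a' = v.
Proof. by move=> [aa' _] sq; rewrite sq -comp_assoc aa' comp_idr. Qed.
End Inverses.

Section Transport.
Variable C : SymMonCat.

Lemma castm_pi (A B : C) (e e' : A = B) : castm e = castm e'.
Proof. by rewrite (ProofIrrelevance.proof_irrelevance _ e e'). Qed.

Lemma castm_refl (A : C) (e : A = A) : castm e = cid A.
Proof. by rewrite (ProofIrrelevance.proof_irrelevance _ e erefl). Qed.

Lemma castm_comp (A B D : C) (e1 : A = B) (e2 : B = D) :
  castm e2 \oc castm e1 = castm (etrans e1 e2).
Proof. by destruct e2, e1; rewrite /castm /= comp_idl. Qed.

Lemma castm_inverse (A B : C) (e : A = B) : inverse_pair (castm e) (castm (esym e)).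
Proof. by split; rewrite castm_comp castm_refl. Qed.

Lemma castm_tens (A A' B B' : C) (e1 : A = A') (e2 : B = B')
  (e : A (x) B = A' (x) B') : castm e1 <x> castm e2 = castm e.
Proof. by destruct e1, e2; rewrite (castm_refl e) /castm /= tensm_id. Qed.

Definition transp_eq (A A' B B' : C) (f : hom A B) (f' : hom A' B') : Prop :=
  exists (ea : A = A') (eb : B = B'), castm eb \oc f = f' \oc castm ea.

Lemma transp_eqE (A A' B B' : C) (f : hom A B) (f' : hom A' B') :
  transp_eq f f' -> forall ea eb, castm eb \oc f = f' \oc castm ea.
Proof. by case=> ea' [eb' E] ea eb; rewrite (castm_pi ea ea') (castm_pi eb eb'). Qed.

Lemma transp_eq_src (A A' B B' : C) (f : hom A B) (f' : hom A' B') :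
  transp_eq f f' -> A = A'.
Proof. by case. Qed.

Lemma transp_eq_refl (A B : C) (f : hom A B) : transp_eq f f.
Proof. by exists erefl, erefl; rewrite comp_idl comp_idr. Qed.

Lemma transp_eq_trans (A A' A'' B B' B'' : C) (f : hom A B) (f' : hom A' B')
  (f'' : hom A'' B'') : transp_eq f f' -> transp_eq f' f'' -> transp_eq f f''.
Proof.
case=> ea [eb E1] [ea' [eb' E2]]; exists (etrans ea ea'), (etrans eb eb').
by rewrite -!castm_comp -comp_assoc E1 comp_assoc E2 -comp_assoc.
Qed.

Lemma transp_eq_sym (A A' B B' : C) (f : hom A B) (f' : hom A' B') :
  transp_eq f f' -> transp_eq f' f.
Proof.
case=> ea [eb E]; exists (esym ea), (esym eb).
apply: (square_inverse (castm_inverse ea)) (esym E).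
by case: (castm_inverse eb).
Qed.

Lemma transp_eq_tens (A A' B B' D D' E E' : C) (f : hom A B) (f' : hom A' B')
  (g : hom D E) (g' : hom D' E') :
  transp_eq f f' -> transp_eq g g' -> transp_eq (f <x> g) (f' <x> g').
Proof.
case=> ea [eb E1] [ea' [eb' E2]].
exists (f_equal2 tens ea ea'), (f_equal2 tens eb eb').
rewrite -(castm_tens eb eb' (f_equal2 tens eb eb')) -tensm_comp E1 E2 tensm_comp.
by rewrite (castm_tens ea ea' (f_equal2 tens ea ea')).
Qed.

Lemma transp_eq_strict_monoidal (F : Functor C) (sm : strict_monoidal F)
  (A A' B B' : C) (f : hom A A') (g : hom B B') :
  transp_eq (Fmor F (f <x> g)) (Fmor F f <x> Fmor F g).
Proof. by exists (sm_tens sm A B), (sm_tens sm A' B'); apply: sm_tensm. Qed.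
End Transport.

Section FoldedTensor.
Variables (C : SymMonCat) (I : Type).

Lemma foldmor_ext (F G : I -> C) (k k' : forall t, hom (F t) (G t)) l :
  (forall t, k t = k' t) -> foldmor l k = foldmor l k'.
Proof.
move=> E; elim: l => [|x [|y l] IH] //; first exact: E.
exact: (f_equal2 tensm (E x) IH).
Qed.

Lemma foldmor_comp (F G J : I -> C) (k : forall t, hom (F t) (G t))
  (k' : forall t, hom (G t) (J t)) l :
  foldmor l k' \oc foldmor l k = foldmor l (fun t => k' t \oc k t).
Proof.
elim: l => [|x [|y l] IH] //=; first exact: comp_idl.
by rewrite -tensm_comp IH.
Qed.

Lemma foldmor_id (F : I -> C) l : foldmor l (fun t => cid (F t)) = cid _.
Proof.
elim: l => [|x [|y l] IH] //.
change (cid (F x) <x> foldmor (y :: l) (fun t => cid (F t)) = cid _).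
by rewrite IH tensm_id.
Qed.

Lemma foldmor_inverse (F G : I -> C) (k : forall t, hom (F t) (G t))
  (k' : forall t, hom (G t) (F t)) l :
  (forall t, inverse_pair (k t) (k' t)) -> inverse_pair (foldmor l k) (foldmor l k').
Proof.
move=> kk'; split; rewrite foldmor_comp -[RHS](foldmor_id _ l);
  by apply: foldmor_ext => t; case: (kk' t).
Qed.

Lemma foldmor_transp (F F' G G' : I -> C) (k : forall t, hom (F t) (G t))
  (k' : forall t, hom (F' t) (G' t)) l :
  (forall t, transp_eq (k t) (k' t)) -> transp_eq (foldmor l k) (foldmor l k').
Proof.
move=> E; elim: l => [|x [|y l] IH]; [exact: transp_eq_refl | exact: E |].
exact: transp_eq_tens (E x) IH.
Qed.

Lemma foldmor_map (J : Type) (f : I -> J) (K K' : J -> C)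
  (k : forall j, hom (K j) (K' j)) l :
  transp_eq (foldmor l (fun t => k (f t))) (foldmor (map f l) k).
Proof.
elim: l => [|x [|y l] IH]; try exact: transp_eq_refl.
exact: transp_eq_tens (transp_eq_refl (k (f x))) IH.
Qed.

Lemma foldmor_strict_monoidal (Fn : Functor C) (sm : strict_monoidal Fn)
  (F G : I -> C) (k : forall t, hom (F t) (G t)) l :
  transp_eq (Fmor Fn (foldmor l k)) (foldmor l (fun t => Fmor Fn (k t))).
Proof.
elim: l => [|x [|y l] IH]; last 2 first.
- exact: transp_eq_refl.
- exact: transp_eq_trans (transp_eq_strict_monoidal sm _ _)
                         (transp_eq_tens (transp_eq_refl _) IH).
by exists (sm_unit sm), (sm_unit sm); rewrite /= Fmor_id comp_idr comp_idl.
Qed.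
End FoldedTensor.

Section Interchange.
Variable C : SymMonCat.

Lemma assoc_inv_nat (A A' B B' D D' : C) (f : hom A A') (g : hom B B') (h : hom D D') :
  assoc_inv A' B' D' \oc (f <x> (g <x> h)) = ((f <x> g) <x> h) \oc assoc_inv A B D.
Proof.
apply: (square_inverse _ (assoc_iso1 A' B' D') (esym (assoc_nat f g h))).
by split; [apply: assoc_iso2 | apply: assoc_iso1].
Qed.

Definition swap3 (X Y R : C) : hom (X (x) (Y (x) R)) (Y (x) (X (x) R)) :=
  assoc Y X R \oc (braid X Y <x> cid R) \oc assoc_inv X Y R.

Lemma swap3_inverse (X Y R : C) : inverse_pair (swap3 X Y R) (swap3 Y X R).
Proof.
have inv (U V : C) : swap3 V U R \oc swap3 U V R = cid _.
  rewrite /swap3 -!comp_assoc (comp_assoc (assoc_inv V U R)) assoc_iso1 comp_idl.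
  rewrite (comp_assoc (braid V U <x> cid R)) -tensm_comp braid_sym comp_idl.
  by rewrite tensm_id comp_idl assoc_iso2.
by split; apply: inv.
Qed.

Lemma swap3_nat (X X' Y Y' R R' : C) (f : hom X X') (g : hom Y Y') (h : hom R R') :
  swap3 X' Y' R' \oc (f <x> (g <x> h)) = (g <x> (f <x> h)) \oc swap3 X Y R.
Proof.
have braid_tens : ((g <x> f) \oc braid X Y) <x> h
                = ((g <x> f) <x> h) \oc (braid X Y <x> cid R).
  by rewrite -tensm_comp comp_idr.
rewrite /swap3 -!comp_assoc assoc_inv_nat (comp_assoc (braid X' Y' <x> cid R')).
by rewrite -tensm_comp braid_nat comp_idl braid_tens !comp_assoc assoc_nat.
Qed.
End Interchange.

Section Reordering.
Variables (C : SymMonCat) (I : eqType).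

Definition reorders (l1 l2 : seq I) : Prop :=
  exists (P : forall K : I -> C, hom (foldobj l1 K) (foldobj l2 K))
         (Q : forall K : I -> C, hom (foldobj l2 K) (foldobj l1 K)),
    (forall K, structural (P K) /\ inverse_pair (P K) (Q K)) /\
    (forall K K' (k : forall t, hom (K t) (K' t)),
        P K' \oc foldmor l1 k = foldmor l2 k \oc P K).

Lemma reorders_refl l : reorders l l.
Proof.
exists (fun K => cid _), (fun K => cid _); split=> [K|K K' k].
  by split; [constructor | split; apply: comp_idl].
by rewrite comp_idl comp_idr.
Qed.

Lemma reorders_trans l1 l2 l3 : reorders l1 l2 -> reorders l2 l3 -> reorders l1 l3.
Proof.
case=> [P1 [Q1 [iso1 nat1]]] [P2 [Q2 [iso2 nat2]]].
exists (fun K => P2 K \oc P1 K), (fun K => Q1 K \oc Q2 K); split=> [K|K K' k].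
  case: (iso1 K) (iso2 K) => st1 inv1 [st2 inv2].
  by split; [apply: st_comp | apply: inverse_pair_comp].
by rewrite -comp_assoc nat1 comp_assoc nat2 -comp_assoc.
Qed.

Lemma reorders_cons x l1 l2 :
  size l1 = size l2 -> reorders l1 l2 -> reorders (x :: l1) (x :: l2).
Proof.
case: l1 => [|a l1]; case: l2 => [|b l2] // _ [P [Q [iso nat]]];
  first exact: reorders_refl.
exists (fun K => (cid (K x) <x> P K
                  : hom (foldobj (x :: a :: l1) K) (foldobj (x :: b :: l2) K))).
exists (fun K => (cid (K x) <x> Q K
                  : hom (foldobj (x :: b :: l2) K) (foldobj (x :: a :: l1) K))).
split=> [K|K K' k].
  case: (iso K) => st [PQ QP]; split; first by apply: st_tens => //; constructor.
  by split; rewrite -tensm_comp comp_idl ?PQ ?QP tensm_id.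
change ((cid (K' x) <x> P K') \oc (k x <x> foldmor (a :: l1) k)
      = (k x <x> foldmor (b :: l2) k) \oc (cid (K x) <x> P K)).
by rewrite -!tensm_comp nat comp_idl comp_idr.
Qed.

Lemma reorders_swap x y l : reorders [:: x, y & l] [:: y, x & l].
Proof.
case: l => [|c l].
  exists (fun K => (braid (K x) (K y)
                    : hom (foldobj [:: x; y] K) (foldobj [:: y; x] K))).
  exists (fun K => (braid (K y) (K x)
                    : hom (foldobj [:: y; x] K) (foldobj [:: x; y] K))).
  split=> [K|K K' k]; last exact: braid_nat.
  by split; [constructor | split; apply: braid_sym].
exists (fun K => (swap3 (K x) (K y) (foldobj (c :: l) K)
                  : hom (foldobj [:: x, y, c & l] K) (foldobj [:: y, x, c & l] K))).
exists (fun K => (swap3 (K y) (K x) (foldobj (c :: l) K)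
                  : hom (foldobj [:: y, x, c & l] K) (foldobj [:: x, y, c & l] K))).
split=> [K|K K' k]; last exact: swap3_nat.
by split; [repeat constructor | apply: swap3_inverse].
Qed.

Lemma reorders_front (a b : seq I) x : reorders (a ++ x :: b) (x :: a ++ b).
Proof.
elim: a => [|y a IH] /=; first exact: reorders_refl.
apply: reorders_trans (reorders_swap _ _ _).
by apply: reorders_cons IH; rewrite /= !size_cat addnS.
Qed.

Lemma perm_reorders (l1 l2 : seq I) : perm_eq l1 l2 -> reorders l1 l2.
Proof.
elim: l2 l1 => [|x l2 IH] l1 hp.
  by move: (perm_size hp) => /size0nil ->; apply: reorders_refl.
have xl1 : x \in l1 by rewrite (perm_mem hp) mem_head.
move: hp; case/splitPr: xl1 => a b hp.
have hp' : perm_eq (a ++ b) l2 by rewrite -(perm_cons x) -(perm_catCA a [:: x] b).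
apply: reorders_trans (reorders_front a b x) _.
by apply: reorders_cons (IH _ hp'); apply: perm_size.
Qed.
End Reordering.

Local Open Scope group_scope.

Section Transversal.
Variables (gT : finGroupType) (H : {group gT}) (ts : seq gT) (g : gT).
Hypothesis hts : left_transversal H ts.

Lemma transversal_uniq : uniq ts.
Proof.
have: forall x, count (fun u => x \in u *: H) ts <= 1 by move=> x; rewrite hts.
elim: ts => [|y s IH] //= cnt; apply/andP; split; last first.
  by apply: IH => x; apply: leq_trans (cnt x); apply: leq_addl.
apply/negP => ys; have := cnt y; rewrite lcoset_refl add1n ltnS leqn0 => /eqP.
by apply/eqP; rewrite -lt0n -has_count; apply/hasP; exists y => //; apply: lcoset_refl.
Qed.

Lemma translate_meets_coset t : has (fun u => u \in t *: H) [seq g * u | u <- ts].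
Proof.
have : 0 < count (fun u => g^-1 * t \in u *: H) ts by rewrite hts.
rewrite -has_count => /hasP [u uin hu]; apply/hasP; exists (g * u); first exact: map_f.
by rewrite lcoset_sym mem_lcoset invMg -mulgA -mem_lcoset.
Qed.

Lemma hrep_rep t :
  t * hrep H ts g t \in [seq g * u | u <- ts] /\ t * hrep H ts g t \in t *: H.
Proof.
have has_t := translate_meets_coset t; rewrite /hrep mulKVg; split.
  by apply: mem_nth; rewrite -has_find; exact: has_t.
exact: nth_find.
Qed.

Lemma hrepH t : hrep H ts g t \in H.
Proof. by rewrite -(mulKg t (hrep H ts g t)) -mem_lcoset; case: (hrep_rep t). Qed.

Lemma perm_hrep : perm_eq [seq g * u | u <- ts] [seq t * hrep H ts g t | t <- ts].
Proof.
have uts := transversal_uniq.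
have ugts : uniq [seq g * u | u <- ts] by rewrite map_inj_uniq //; apply: mulgI.
have ureps : uniq [seq t * hrep H ts g t | t <- ts].
  rewrite map_inj_in_uniq // => t1 t2 t1in t2in E.
  have: count (fun u => t1 * hrep H ts g t1 \in u *: H) ts = 1%N by rewrite hts.
  rewrite -size_filter.
  have: t1 \in filter (fun u => t1 * hrep H ts g t1 \in u *: H) ts.
    by rewrite mem_filter t1in andbT; case: (hrep_rep t1).
  have: t2 \in filter (fun u => t1 * hrep H ts g t1 \in u *: H) ts.
    by rewrite mem_filter t2in andbT E; case: (hrep_rep t2).
  by case: filter => [|c [|d l]] //; rewrite !inE => /eqP -> /eqP ->.
have sub : {subset [seq t * hrep H ts g t | t <- ts] <= [seq g * u | u <- ts]}.
  by move=> x /mapP [t _ ->]; case: (hrep_rep t).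
have sizes : size [seq g * u | u <- ts] <= size [seq t * hrep H ts g t | t <- ts].
  by rewrite !size_map.
have [_ E] := uniq_min_size ureps sub sizes.
by apply: uniq_perm => // x; rewrite E.
Qed.
End Transversal.

Section ActionOnFolds.
Variables (gT : finGroupType) (C : SymMonCat) (phi : StrictAction gT C).

Lemma transp_eq_actM g h (A B : C) (f : hom A B) :
  transp_eq (Fmor (phi g) (Fmor (phi h) f)) (Fmor (phi (g * h)) f).
Proof. by exists (actM_ob phi g h A), (actM_ob phi g h B); apply: actM_mor. Qed.

Variables (ts : seq gT) (g : gT).

Lemma fold_translate (A B : C) (f : hom A B) :
  transp_eq (Fmor (phi g) (FoldMor phi ts f))
            (foldmor [seq g * u | u <- ts] (fun x => Fmor (phi x) f)).
Proof.
apply: transp_eq_trans (foldmor_strict_monoidal (act_monoidal phi g) _ ts) _.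
apply: transp_eq_trans (foldmor_transp ts (fun u => transp_eq_actM g u f)) _.
exact: (foldmor_map (fun u => g * u) (fun x => Fmor (phi x) f) ts).
Qed.

Variable hr : gT -> gT.

Lemma fold_twist (A B : C) (f : hom A B) :
  transp_eq (foldmor [seq t * hr t | t <- ts] (fun x => Fmor (phi x) f))
            (foldmor ts (fun t => Fmor (phi t) (Fmor (phi (hr t)) f))).
Proof.
apply: transp_eq_sym.
apply: transp_eq_trans (foldmor_transp ts (fun t => transp_eq_actM t (hr t) f)) _.
exact: (foldmor_map (fun t => t * hr t) (fun x => Fmor (phi x) f) ts).
Qed.

Hypothesis perm_reps : perm_eq [seq g * u | u <- ts] [seq t * hr t | t <- ts].

Lemma reorder_iso :
  exists (sigma : forall A : C, hom (phi g (FoldOb phi ts A))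
                                    (foldobj ts (fun t => phi t (phi (hr t) A))))
         (sigmainv : forall A : C, hom (foldobj ts (fun t => phi t (phi (hr t) A)))
                                       (phi g (FoldOb phi ts A))),
    (forall A, structural (sigma A) /\ inverse_pair (sigma A) (sigmainv A)) /\
    (forall (A B : C) (f : hom A B),
        sigma B \oc Fmor (phi g) (FoldMor phi ts f)
        = foldmor ts (fun t => Fmor (phi t) (Fmor (phi (hr t)) f)) \oc sigma A).
Proof.
have [P [Q [iso nat]]] := perm_reorders C perm_reps.
pose e1 A := transp_eq_src (fold_translate (cid A)).
pose e2 A := transp_eq_src (fold_twist (cid A)).
pose K (A : C) x := phi x A.
exists (fun A => castm (e2 A) \oc P (K A) \oc castm (e1 A)).
exists (fun A => castm (esym (e1 A)) \oc (Q (K A) \oc castm (esym (e2 A)))).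
split=> [A|A B f].
  case: (iso (K A)) => st inv; split; first by repeat apply: st_comp => //; constructor.
  apply: inverse_pair_comp; first exact: castm_inverse.
  by apply: inverse_pair_comp => //; apply: castm_inverse.
rewrite -!comp_assoc (transp_eqE (fold_translate f)) (comp_assoc (P (K B))) nat.
by rewrite !comp_assoc (transp_eqE (fold_twist f)).
Qed.
End ActionOnFolds.

Section Untwisting.
Variables (gT : finGroupType) (C : SymMonCat) (phi : StrictAction gT C)
  (H : {group gT}) (eta : forall (A : C) (h : gT), hom A (phi h A))
  (etainv : forall (A : C) (h : gT), hom (phi h A) A).
Hypothesis eta_inverse : forall A h, h \in H -> inverse_pair (etainv A h) (eta A h).
Variables (ts : seq gT) (hr : gT -> gT).
Hypothesis hrH : forall t, hr t \in H.

Definition untwist (A : C) : hom (foldobj ts (fun t => phi t (phi (hr t) A)))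
                                 (FoldOb phi ts A) :=
  foldmor ts (fun t => Fmor (phi t) (etainv A (hr t))).

Definition untwist_inv (A : C) : hom (FoldOb phi ts A)
                                     (foldobj ts (fun t => phi t (phi (hr t) A))) :=
  foldmor ts (fun t => Fmor (phi t) (eta A (hr t))).

Lemma untwist_inverse A : inverse_pair (untwist A) (untwist_inv A).
Proof.
apply: foldmor_inverse => t; case: (eta_inverse A (hrH t)) => ie ei.
by split; rewrite -Fmor_comp ?ie ?ei Fmor_id.
Qed.

Lemma untwist_nat (A B : C) (f : hom A B) : hat_mor H eta f ->
  untwist B \oc foldmor ts (fun t => Fmor (phi t) (Fmor (phi (hr t)) f))
  = FoldMor phi ts f \oc untwist A.
Proof.
move=> hf; rewrite /untwist /FoldMor !foldmor_comp; apply: foldmor_ext => t.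
rewrite -!Fmor_comp; congr (Fmor _ _).
have [etaK_A etaKV_A] := eta_inverse A (hrH t).
have [etaK_B _] := eta_inverse B (hrH t).
exact: square_inverse (conj etaKV_A etaK_A) etaK_B (hf _ (hrH t)).
Qed.
End Untwisting.

Unset Implicit Arguments.

Theorem mainTheorem3 (gT : finGroupType) (C : SymMonCat)
  (phi : StrictAction gT C) (H : {group gT})
  (eta : forall (A : C) (h : gT), hom A (phi h A))
  (etainv : forall (A : C) (h : gT), hom (phi h A) A)
  (eta_iso1 : forall A h, h \in H -> etainv A h \oc eta A h = cid A)
  (eta_iso2 : forall A h, h \in H -> eta A h \oc etainv A h = cid (phi h A))
  (eta_cocycle : forall A h h', h \in H -> h' \in H ->
      castm (actM_ob phi h h' A) \oc Fmor (phi h) (eta A h') \oc eta A h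
      = eta A (h * h'))
  (eta_tens : forall (A B : C) h, h \in H ->
      castm (sm_tens (act_monoidal phi h) A B) \oc eta (A (x) B) h
      = eta A h <x> eta B h)
  (ts : seq gT) (hts : left_transversal H ts) :
  forall g : gT,
  exists (alpha : forall A : C, hom (phi g (FoldOb phi ts A)) (FoldOb phi ts A))
         (alphainv : forall A : C, hom (FoldOb phi ts A) (phi g (FoldOb phi ts A))),
    (forall A, alpha A \oc alphainv A = cid _ /\ alphainv A \oc alpha A = cid _) /\
    (forall A : C,
       exists sigma : hom (phi g (FoldOb phi ts A))
                          (foldobj ts (fun t => phi t (phi (hrep H ts g t) A))),
         structural sigma /\
         alpha A = foldmor ts (fun t => Fmor (phi t) (etainv A (hrep H ts g t)))
                   \oc sigma) /\
    (forall (A B : C) (f : hom A B), @hat_mor gT C phi H eta A B f ->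
       alpha B \oc Fmor (phi g) (FoldMor phi ts f) \oc alphainv A
       = FoldMor phi ts f).
Proof.
move=> g; pose hr t := hrep H ts g t.
have eta_inverse A h : h \in H -> inverse_pair (etainv A h) (eta A h).
  by move=> hH; split; [apply: eta_iso1 | apply: eta_iso2].
have hrH t : hr t \in H := hrepH g hts t.
have [sigma [sigmainv [sigma_iso sigma_nat]]] :=
  reorder_iso phi (perm_hrep g hts).
pose rho := untwist etainv ts hr.
pose rhoinv := untwist_inv eta ts hr.
have rho_iso A : inverse_pair (rho A) (rhoinv A) := untwist_inverse eta_inverse ts hrH A.
have alpha_iso A : inverse_pair (rho A \oc sigma A) (sigmainv A \oc rhoinv A).
  by apply: inverse_pair_comp; [case: (sigma_iso A) | apply: rho_iso].
exists (fun A => rho A \oc sigma A), (fun A => sigmainv A \oc rhoinv A).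
split; first exact: alpha_iso.
split=> [A | A B f hf]; first by exists (sigma A); case: (sigma_iso A).
apply: conj_square (alpha_iso A) _.
rewrite -comp_assoc sigma_nat (comp_assoc (rho B)) (untwist_nat eta_inverse ts hrH hf).
by rewrite comp_assoc.
Qed.
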